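(* Let $n$ and $\delta$ be given, and let $m$ be an integer. Set $$\ell=\frac{2m-n-2\log(1/\delta)}{3},\qquad v=\frac{n-\ell}{2},$$ where the parameters are assumed to be such that $\ell$ and $v$ are nonnegative integers. Consider the following construction, for a chosen representation of $\mathbb{F}_{2^{n-v}}$ as $(n-v)$-bit strings given by coordinates in a basis over $\mathbb{F}_2$ (so that field addition is bitwise XOR). $\mathsf{Gen}(w)$, for $w\in\{0,1\}^n$: 1. Parse $w=a\|b$ with $a\in\{0,1\}^{n-v}$, viewed as an element of $\mathbb{F}_{2^{n-v}}$, and $b\in\{0,1\}^v$. 2. Choose $i$ uniformly from $\mathbb{F}_{2^{n-v}}$. 3. Output $R=[ia]_{v+1}^{n-v}$ (so $|R|=\ell$) and $P=(i,\sigma)$, where $\sigma=[ia]_1^v\oplus b$. $\mathsf{Rep}(w,(i',\sigma'))$: - Output $[i'a]_{v+1}^{n-v}$ if $\sigma'=[i'a]_1^v\oplus b$. - Otherwise output $\perp$. Then there exist a basis of $\mathbb{F}_{2^{n-v}}$ over $\mathbb{F}_2$, a distribution $W$ on $\{0,1\}^n$ with $\mathbf{H}_\infty(W)=m$, and an adversary $A$ with the following property. Sample $w\leftarrow W$, let $(R,P)=\mathsf{Gen}(w)$, and let $P'=A(R,P)$. Then, with probability at least $\delta/2$, both $P'\ne P$ and $\mathsf{Rep}(w,P')\ne\perp$ hold. That is, the post-application robustness of this construction is violated with probability at least $\delta/2$.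
   Context: - $[x]_i^j$ denotes the substring $x_i\cdots x_j$ of a bit string $x$. - $\mathbf{H}_\infty(W)=-\log_2\max_w\Pr[W=w]$. - All logarithms are base 2. - The construction is the robust extractor of Dodis, Katz, Reyzin and Smith (Crypto 2006). - The choice $v=(n-\ell)/2$ with $\ell=(2m-n-2\log(1/\delta))/3$ is the setting that construction prescribes for post-application robustness $\delta$. - The adversary is computationally unbounded and sees both $R$ and $P$. *)

From HB Require Import structures.
From mathcomp Require Import all_boot all_order all_algebra.
From mathcomp Require Import reals exp.
Set Implicit Arguments. Unset Strict Implicit. Unset Printing Implicit Defensive.
Import Order.TTheory GRing.Theory Num.Theory.
Local Open Scope ring_scope.

Definition log2 {R : realType} (x : R) : R := ln x / ln 2.

Section Construction.
Variable F : finFieldType.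

(* F_2-linear combination of a family e of k field elements with
   coefficient bit string s (bit j = coefficient of e_j, j = 0..k-1,
   i.e. the paper's positions 1..k). *)
Definition toF (k : nat) (e : k.-tuple F) (s : seq bool) : F :=
  \sum_(j < k) (if nth false s j then tnth e j else 0).

Definition is_basisF2 (k : nat) (e : k.-tuple F) : Prop :=
  forall x : F, exists! c : k.-tuple bool, toF e c = x.

Definition coords (k : nat) (e : k.-tuple F) (x : F) : seq bool :=
  match [pick c : k.-tuple bool | toF e c == x] with
  | Some c => tval c
  | None => nseq k false
  end.

Definition xors (s t : seq bool) : seq bool :=
  map (fun p => p.1 (+) p.2) (zip s t).

(* Gen(w) with the random choice i made explicit; k = n - v is the length
   of a, and w = a || b.  Returns (R, P) with P = (i, sigma). *)
Definition Gen (k v : nat) (e : k.-tuple F) (w : seq bool) (i : F)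
    : seq bool * (F * seq bool) :=
  let a := toF e (take k w) in
  let b := drop k w in
  let y := coords e (i * a) in
  (drop v y, (i, xors (take v y) b)).

(* Rep(w, (i', sigma')); None stands for the failure symbol ⊥ *)
Definition Rep (k v : nat) (e : k.-tuple F) (w : seq bool) (P' : F * seq bool)
    : option (seq bool) :=
  let a := toF e (take k w) in
  let b := drop k w in
  let y := coords e (P'.1 * a) in
  if P'.2 == xors (take v y) b then Some (drop v y) else None.
End Construction.

Definition is_distr {R : realType} {T : finType} (W : {ffun T -> R}) : Prop :=
  (forall x, 0 <= W x) /\ \sum_x W x = 1.

Definition Hinf {R : realType} {T : finType} (W : {ffun T -> R}) : R :=
  - log2 (\big[Num.max/0]_x W x).

Definition attack_prob {R : realType} (F : finFieldType) (n v : nat)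
    (e : (n - v).-tuple F) (W : {ffun n.-tuple bool -> R})
    (A : seq bool -> F * seq bool -> F * seq bool) : R :=
  \sum_(w : n.-tuple bool) \sum_(i : F)
    W w / #|F|%:R *
    (let RP := Gen v e w i in
     let P' := A RP.1 RP.2 in
     if (P' != RP.2) && (Rep v e w P' != None) then 1 else 0).

(* Write F in the basis 1, g, ..., g^(k-1), k = n - v, for a generator g of the
   multiplicative group; there multiplication by t = g^(l+L) shifts coordinates up
   by l + L as long as nothing overflows.  Let W be uniform on the words a || b whose
   first c0 = n - m bits of b vanish, and let y = [ia].  Then sigma reveals the first
   c0 bits of y and R its last l bits.  If the L bits of y just below position v
   vanish too (probability 2^-L = delta for every i <> 0, because w |-> [ia] || b is
   a bijection), then y differs from the adversary's guess only at positions
   c0 .. c0+l-1, so [t y] and [t guess] agree on their first v bits.  The adversary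
   can therefore answer (i + i t, sigma xor [t guess]_1^v), which Rep accepts since
   (i + i t) a = ia + t(ia). *)

From HB Require Import structures.
From mathcomp Require Import all_boot all_order all_algebra all_fingroup all_solvable all_field.
From mathcomp Require Import reals exp.
From mathcomp Require Import zify ring lra.
Import Order.TTheory GRing.Theory Num.Theory.
Local Open Scope ring_scope.
Set Implicit Arguments. Unset Strict Implicit. Unset Printing Implicit Defensive.

Lemma size_xors s t : size (xors s t) = minn (size s) (size t).
Proof. by rewrite size_map size_zip. Qed.

Lemma nth_xors s t j : (j < size (xors s t))%N ->
  nth false (xors s t) j = nth false s j (+) nth false t j.
Proof.
rewrite size_xors => hj; rewrite (nth_map (false, false)) ?size_zip //.
by rewrite nth_zip_cond size_zip hj.
Qed.

Lemma take_xors v s t : take v (xors s t) = xors (take v s) (take v t).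
Proof.
apply: (@eq_from_nth _ false); first by rewrite !(size_take_min, size_xors); lia.
move=> j; rewrite size_take_min size_xors => hj.
by rewrite nth_take ?nth_xors ?nth_take ?size_xors ?size_take_min //; lia.
Qed.

Lemma xorsAC s t u : xors (xors s t) u = xors (xors s u) t.
Proof.
apply: (@eq_from_nth _ false); first by rewrite !size_xors; lia.
move=> j; rewrite !size_xors !leq_min => /andP[/andP[js jt] ju].
by rewrite !nth_xors ?size_xors ?leq_min ?js ?jt ?ju // addbAC.
Qed.

Definition zero_on (ps : seq nat) (s : seq bool) : bool :=
  all (fun j => ~~ nth false s j) ps.

Lemma take_xors_zero_on v s t : size s = size t -> zero_on (iota 0 v) t ->
  take v (xors s t) = take v s.
Proof.
move=> hst /allP ht; apply: (@eq_from_nth _ false).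
  by rewrite !size_take_min size_xors hst minnn.
move=> j; rewrite size_take_min size_xors hst minnn => hj.
rewrite !nth_take ?nth_xors; try lia; last by rewrite size_xors hst; lia.
by rewrite (negbTE (ht j _)) ?addbF // mem_iota; lia.
Qed.

Section Coordinates.
Variables (F : finFieldType) (k : nat) (e : k.-tuple F).
Hypothesis e_basis : is_basisF2 e.

Lemma size_coords x : size (coords e x) = k.
Proof. by rewrite /coords; case: pickP => [c _|_]; rewrite ?size_tuple ?size_nseq. Qed.

Lemma coordsK x : toF e (coords e x) = x.
Proof.
rewrite /coords; case: pickP => [c /eqP //|none].
have [c [hc _]] := e_basis x.
by have := none c; rewrite hc eqxx.
Qed.

Lemma toF_inj s t : size s = k -> size t = k -> toF e s = toF e t -> s = t.
Proof.
move=> /eqP hs /eqP ht st.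
have [c [_ c_uniq]] := e_basis (toF e s).
have cs : c = Tuple hs by exact: c_uniq.
have ct : c = Tuple ht by apply: c_uniq; rewrite /= st.
by have := congr1 val (etrans (esym cs) ct).
Qed.

Lemma toFK s : size s = k -> coords e (toF e s) = s.
Proof. by move=> hs; apply: toF_inj; rewrite ?size_coords ?coordsK. Qed.

Lemma toF_xors s t : 2 \in [pchar F] -> (k <= size s)%N -> (k <= size t)%N ->
  toF e (xors s t) = toF e s + toF e t.
Proof.
move=> F2 hs ht; rewrite /toF -big_split; apply: eq_bigr => j _ /=.
rewrite nth_xors ?size_xors; last by rewrite leq_min (leq_trans _ hs) ?(leq_trans _ ht).
by case: nth; case: nth; rewrite /= ?addr0 ?add0r // (addrr_pchar2 F2).
Qed.

Lemma coordsD x y : 2 \in [pchar F] ->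
  coords e (x + y) = xors (coords e x) (coords e y).
Proof.
move=> F2; apply: toF_inj; rewrite ?size_coords ?size_xors ?size_coords ?minnn //.
by rewrite toF_xors ?size_coords ?coordsK.
Qed.
End Coordinates.

Section PowerBasis.
Variables (F : finFieldType) (k : nat).
Hypothesis hF : #|F| = (2 ^ k)%N.
Variable g : F.
Hypothesis g_gen : forall x, x != 0 -> exists j, x = g ^+ j.

Let F2 : 2 \in [pchar F] := card_finPcharP hF (isT : prime 2).

Definition powsum (D : nat) (s : nat -> bool) : F :=
  \sum_(0 <= j < D) (if s j then g ^+ j else 0).

Lemma eq_powsum D s t : {in gtn D, s =1 t} -> powsum D s = powsum D t.
Proof. by move=> st; apply: eq_big_nat => j /andP[_ hj]; rewrite st. Qed.

Lemma powsumD D s t : powsum D s + powsum D t = powsum D (fun j => s j (+) t j).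
Proof.
rewrite -big_split; apply: eq_bigr => j _.
by case: (s j); case: (t j); rewrite /= ?addr0 ?add0r // (addrr_pchar2 F2).
Qed.

Lemma powsum_recr D s : powsum D.+1 s = powsum D s + (if s D then g ^+ D else 0).
Proof. by rewrite /powsum big_nat_recr. Qed.

Lemma powsum_widen D D' s : (D <= D')%N -> {in [pred j | (D <= j < D')%N], s =1 pred0} ->
  powsum D' s = powsum D s.
Proof.
move=> hD s0; rewrite /powsum (big_cat_nat (leq0n D) hD) //= [X in _ + X]big_nat_cond.
by rewrite [X in _ + X]big1 ?addr0 // => j /andP[hj _]; rewrite s0.
Qed.

Lemma mul_gX_powsum h D s :
  g ^+ h * powsum D s = powsum (h + D) (fun j => (h <= j)%N && s (j - h)%N).
Proof.
rewrite /powsum (big_cat_nat (leq0n h) (leq_addr D h)) /=.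
rewrite [X in _ = X + _]big_nat_cond [X in _ = X + _]big1 ?add0r; last first.
  by move=> j /andP[/andP[_ /ltn_geF ->]].
rewrite -{2}[h]add0n big_addn addKn mulr_sumr; apply: eq_bigr => j _.
by rewrite leq_addl addnK; case: (s j); rewrite ?mulr0 // exprD mulrC.
Qed.

(* Otherwise the F_2-span of g^0, ..., g^(D-1), which has at most 2^D < #|F|
   elements, would be stable under multiplication by g and thus contain every
   power of g. *)
Lemma gX_notin_powsum D s : (D < k)%N -> g ^+ D != powsum D s.
Proof.
move=> ltDk; apply/eqP => gD.
pose span x := exists t, x = powsum D t.
have span0 : span 0 by exists pred0; rewrite /powsum big1.
have spanD x y : span x -> span y -> span (x + y).
  by move=> [t ->] [u ->]; exists (fun j => t j (+) u j); rewrite powsumD.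
have span_mulg x : span x -> span (g * x).
  move=> [t ->]; rewrite -[g]expr1 mul_gX_powsum powsum_recr.
  by apply: spanD; [eexists | case: ifP => _; [exists s|]].
have span1 : span 1.
  have D_gt0 : (0 < D)%N.
    by case: (posnP D) gD => // -> /eqP; rewrite /powsum big_geq // oner_eq0.
  exists (pred1 0%N); rewrite (@powsum_widen 1) // /powsum ?big_nat1 //.
  by move=> j /andP[j_gt0 _] /=; rewrite eqn0Ngt j_gt0.
have spanT x : span x.
  have [->|/g_gen[j ->]] := eqVneq x 0; first exact: span0.
  by elim: j => [|j IHj]; rewrite ?exprS; [exact: span1 | exact: span_mulg].
pose f (c : D.-tuple bool) := powsum D (nth false c).
have : (#|F| <= #|codom f|)%N.
  apply/subset_leq_card/subsetP => x _; have [t ->] := spanT x; apply/codomP.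
  exists [tuple t j | j < D]; apply: eq_powsum => j /= hj.
  by rewrite -[j]/(nat_of_ord (Ordinal hj)) nth_mktuple.
move/leq_trans/(_ (card_size _)); rewrite size_codom card_tuple card_bool hF.
by rewrite leq_exp2l // leqNgt ltDk.
Qed.

Lemma powsum_eq0 D s : (D <= k)%N -> powsum D s = 0 -> {in gtn D, s =1 pred0}.
Proof.
elim: D => [//|D IHD] leDk; rewrite powsum_recr; case: ifP => sD.
  rewrite addrC => /eqP; rewrite addr_eq0 (oppr_pchar2 F2) => gD.
  by have := gX_notin_powsum s leDk; rewrite gD.
rewrite addr0 => /IHD-/(_ (ltnW leDk)) s0 j.
by rewrite unfold_in /= ltnS leq_eqVlt => /predU1P[-> | /s0].
Qed.

Lemma powsum_inj s t : powsum k s = powsum k t -> {in gtn k, s =1 t}.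
Proof.
move=> st j jk.
have xor0 : powsum k (fun j => s j (+) t j) = 0.
  by rewrite -powsumD st (addrr_pchar2 F2).
by have /negbT := powsum_eq0 (leqnn k) xor0 jk; rewrite negb_add => /eqP.
Qed.

Definition pbasis : k.-tuple F := [tuple g ^+ j | j < k].

Lemma toF_pbasis s : toF pbasis s = powsum k (nth false s).
Proof. by rewrite /toF /powsum big_mkord; apply: eq_bigr => j _; rewrite tnth_mktuple. Qed.

Lemma pbasis_is_basis : is_basisF2 pbasis.
Proof.
have toF_inj : injective (fun c : k.-tuple bool => toF pbasis c).
  move=> c d; rewrite !toF_pbasis => /powsum_inj cd; apply: eq_from_tnth => j.
  by rewrite !(tnth_nth false) (cd _ (ltn_ord j)).
move=> x; have /codomP[c ->] : x \in codom (fun c : k.-tuple bool => toF pbasis c).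
  by apply: inj_card_onto; rewrite ?card_tuple ?card_bool ?hF.
by exists c; split=> // d /toF_inj.
Qed.

Lemma coords_powsum s : coords pbasis (powsum k s) = mkseq s k.
Proof.
rewrite -[RHS](toFK pbasis_is_basis (size_mkseq s k)) toF_pbasis.
by congr coords; apply: eq_powsum => j /= hj; rewrite nth_mkseq.
Qed.

Lemma coords_mul_gX h x : (h <= k)%N -> zero_on (iota (k - h) h) (coords pbasis x) ->
  coords pbasis (g ^+ h * x) =
  mkseq (fun j => (h <= j)%N && nth false (coords pbasis x) (j - h)) k.
Proof.
move=> lehk /allP top0; rewrite -{1}(coordsK pbasis_is_basis x) toF_pbasis.
rewrite (@powsum_widen (k - h)) ?leq_subr ?mul_gX_powsum ?subnKC ?coords_powsum //.
move=> j /andP[hj1 hj2] /=; apply/negbTE/top0.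
by rewrite mem_iota hj1 subnK.
Qed.
End PowerBasis.

Lemma finField_generator (F : finFieldType) :
  exists2 g : F, g != 0 & forall x, x != 0 -> exists j, x = g ^+ j.
Proof.
have /cyclicP[u def_units] := field_unit_group_cyclic [group of [set: {unit F}]].
exists (FinRing.uval u); first by rewrite -unitfE (valP u).
move=> x x_neq0; have ux : x \is a GRing.unit by rewrite unitfE.
have : (Sub x ux : {unit F}) \in <[u]>%g by rewrite -def_units inE.
by case/cycleP => j xj; exists j; rewrite -FinRing.val_unitX -xj.
Qed.

Section ZeroSets.
Variable n : nat.

Definition zero_set (ps : seq nat) : {set n.-tuple bool} :=
  [set w : n.-tuple bool | zero_on ps w].

Definition flip (j : nat) (w : n.-tuple bool) : n.-tuple bool :=
  [tuple if i == j :> nat then ~~ tnth w i else tnth w i | i < n].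

Lemma nth_flip j w p :
  nth false (flip j w) p = if p == j then (p < n)%N && ~~ nth false w p else nth false w p.
Proof.
case: (ltnP p n) => hp; last by rewrite !nth_default ?size_tuple //; case: ifP.
by rewrite -[p]/(nat_of_ord (Ordinal hp)) nth_mktuple (tnth_nth false).
Qed.

Lemma flipK j : involutive (flip j).
Proof.
move=> w; apply: eq_from_tnth => i; rewrite !tnth_mktuple.
by case: (i == j :> nat); rewrite ?negbK.
Qed.

(* Flipping bit j is a bijection between the words of [zero_set ps] with bit j
   set and those with bit j clear. *)
Lemma card_zero_set_mul ps : uniq ps -> all (gtn n) ps ->
  (#|zero_set ps| * 2 ^ size ps)%N = (2 ^ n)%N.
Proof.
elim: ps => [|j ps IHps] /=.
  rewrite muln1 => _ _; rewrite -[2%N]card_bool -card_tuple -cardsT.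
  by apply: eq_card => w; rewrite !inE.
case/andP=> j_notin_ps uniq_ps /andP[jn ps_n]; rewrite -(IHps uniq_ps ps_n).
rewrite expnS mulnCA mulnA; congr (_ * _)%N.
have flip_zero_on w : zero_on ps (flip j w) = zero_on ps w.
  apply: eq_in_all => p p_ps; rewrite nth_flip.
  by case: eqP => // pj; move: j_notin_ps; rewrite -pj p_ps.
rewrite -(cardsID [set w : n.-tuple bool | nth false w j] (zero_set ps)) mul2n -addnn.
congr (_ + _)%N.
  rewrite -(card_preimset _ (can_inj (flipK j))); apply: eq_card => w.
  by rewrite !inE flip_zero_on nth_flip eqxx jn andbC.
by apply: eq_card => w; rewrite !inE /zero_on /= andbC.
Qed.

Lemma card_zero_set ps : uniq ps -> all (gtn n) ps -> #|zero_set ps| = (2 ^ (n - size ps))%N.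
Proof.
move=> uniq_ps ps_n; have : (size ps <= n)%N.
  by rewrite -[n](size_iota 0) uniq_leq_size // => j /(allP ps_n); rewrite mem_iota.
move/subnK => /(congr1 (expn 2)); rewrite expnD -(card_zero_set_mul uniq_ps ps_n).
by move/eqP; rewrite eqn_pmul2r ?expn_gt0 // => /eqP.
Qed.

Lemma card_zero_set_iota a b : (a + b <= n)%N -> #|zero_set (iota a b)| = (2 ^ (n - b))%N.
Proof.
move=> le_abn; rewrite card_zero_set ?size_iota ?iota_uniq //.
by apply/allP => j; rewrite mem_iota /= => /andP[_ /leq_trans->].
Qed.
End ZeroSets.

Section UniformDistribution.
Variables (R : realType) (T : finType) (S : {set T}).
Hypothesis S_neq0 : S != set0.

Definition uniform_on : {ffun T -> R} := [ffun x => if x \in S then #|S|%:R^-1 else 0].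

Let S_gt0 : 0 < #|S|%:R :> R.
Proof. by rewrite ltr0n card_gt0. Qed.

Lemma uniform_on_ge0 x : 0 <= uniform_on x.
Proof. by rewrite ffunE; case: ifP; rewrite ?invr_ge0 ?ler0n. Qed.

Lemma uniform_on_is_distr : is_distr uniform_on.
Proof.
split=> [|]; first exact: uniform_on_ge0.
rewrite (eq_bigr _ (fun x _ => ffunE _ x)) -big_mkcond sumr_const.
by rewrite -[_ *+ _]mulr_natr mulVf ?gt_eqF.
Qed.

Lemma Hinf_uniform_on : Hinf uniform_on = log2 (#|S|%:R : R).
Proof.
have [x xS] := set0Pn _ S_neq0.
have max_unif : \big[Num.max/0]_y uniform_on y = #|S|%:R^-1.
  apply/eqP; rewrite eq_le; apply/andP; split.
    apply: bigmax_le => [|y _]; first by rewrite invr_ge0 ler0n.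
    by rewrite ffunE; case: ifP; rewrite ?invr_ge0 ?ler0n.
  by rewrite (le_trans _ (le_bigmax _ _ x)) // ffunE xS.
by rewrite /Hinf max_unif /log2 lnV ?posrE // mulNr opprK.
Qed.
End UniformDistribution.

Lemma log2_exp2 (R : realType) m : log2 ((2 : R) ^+ m) = m%:R.
Proof.
rewrite /log2 lnXn // -[_ *+ _]mulr_natr mulrAC mulfV ?mul1r //.
by rewrite gt_eqF // ln_gt0 // ltr1n.
Qed.

Section Attack.
Variables (F : finFieldType) (n v c0 l L : nat).
Hypothesis def_n : n = (2 * v + l)%N.
Hypothesis def_v : v = (c0 + l + L)%N.
Local Notation k := (n - v)%N.
Hypothesis hF : #|F| = (2 ^ k)%N.
Variable g : F.
Hypothesis g_neq0 : g != 0.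
Hypothesis g_gen : forall x, x != 0 -> exists j, x = g ^+ j.
Local Notation e := (pbasis k g).

Let F2 : 2 \in [pchar F] := card_finPcharP hF (isT : prime 2).
Let e_basis : is_basisF2 e := pbasis_is_basis hF g_gen.

(* From R and sigma the adversary knows every coordinate of y = [ia] except
   those at positions c0 .. v-1, whose top L bits it bets to be zero. *)
Definition adv_guess (sigma r : seq bool) : seq bool :=
  take c0 sigma ++ nseq (l + L) false ++ r.

Definition adversary (r : seq bool) (P : F * seq bool) : F * seq bool :=
  let t := g ^+ (l + L) in
  (P.1 + P.1 * t, xors P.2 (take v (coords e (t * toF e (adv_guess P.2 r))))).

Lemma size_adv_guess y b : size y = k -> size b = v ->
  size (adv_guess (xors (take v y) b) (drop v y)) = k.
Proof.
move=> sy sb.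
by rewrite !size_cat size_take_min size_xors size_take_min size_nseq size_drop sy sb; lia.
Qed.

Lemma adv_guess_error y b : size y = k -> size b = v ->
  zero_on (iota 0 c0) b -> zero_on (iota (v - L) L) y ->
  let d := xors y (adv_guess (xors (take v y) b) (drop v y)) in
  zero_on (iota 0 c0) d && zero_on (iota (c0 + l) (l + L)) d.
Proof.
move=> sy sb /allP b0 /allP y0 /=.
set guess := adv_guess _ _.
have s_guess : size guess = k := size_adv_guess sy sb.
have nth_guess j : (j < k)%N -> nth false guess j =
    if (j < c0)%N then nth false y j (+) nth false b j
    else if (j < v)%N then false else nth false y j.
  move=> jk; rewrite nth_cat size_take_min size_xors size_take_min sy sb.
  case: ifP => [j_c0 | /negbT c0_j].
    rewrite ifT; last lia.
    by rewrite nth_take ?nth_xors ?size_xors ?size_take_min ?nth_take ?sy ?sb //; lia.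
  rewrite ifF; last lia.
  rewrite nth_cat size_nseq nth_drop; case: ifP => j_v.
    by rewrite nth_nseq if_same ifT //; lia.
  by rewrite ifF; [congr nth | ]; lia.
apply/andP; split; apply/allP => j; rewrite mem_iota => /andP[j1 j2].
all: rewrite nth_xors ?size_xors ?sy ?s_guess ?minnn ?nth_guess; try lia.
  by rewrite ifT ?addbA ?addbb // (negbTE (b0 j _)) // mem_iota; lia.
rewrite ifF; last lia.
case: ifP => j_v; last by rewrite addbb.
by rewrite addbF y0 // mem_iota; lia.
Qed.

(* Multiplying by g^(l+L) moves the unknown window c0 .. c0+l-1 of the
   guessing error past position v, so that it no longer affects sigma. *)
Lemma adv_guess_mask y b : size y = k -> size b = v ->
  zero_on (iota 0 c0) b -> zero_on (iota (v - L) L) y ->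
  let t := g ^+ (l + L) in
  take v (coords e (t * toF e y)) =
  take v (coords e (t * toF e (adv_guess (xors (take v y) b) (drop v y)))).
Proof.
move=> sy sb b0 y0 t; set guess := adv_guess _ _.
have /andP[/allP d_low d_high] := adv_guess_error sy sb b0 y0; move: d_low d_high.
set d := xors y guess => d_low d_high.
have s_guess : size guess = k := size_adv_guess sy sb.
have s_d : size d = k by rewrite size_xors sy s_guess minnn.
have td_low : zero_on (iota 0 v) (coords e (t * toF e d)).
  have lL_k : (l + L <= k)%N by lia.
  rewrite coords_mul_gX // ?toFK //; last by rewrite (_ : k - _ = c0 + l)%N //; lia.
  apply/allP => j; rewrite mem_iota => /andP[_ j_v]; rewrite nth_mkseq; last lia.
  by case: leqP => //= lL_j; rewrite d_low // mem_iota; lia.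
have -> : toF e y = toF e guess + toF e d.
  by rewrite toF_xors ?sy ?s_guess // addrCA (addrr_pchar2 F2) addr0.
by rewrite mulrDr coordsD // take_xors_zero_on // !size_coords.
Qed.

Lemma adversary_succeeds (w : n.-tuple bool) i : i != 0 ->
  zero_on (iota k c0) w -> zero_on (iota (v - L) L) (coords e (i * toF e (take k w))) ->
  let RP := Gen v e w i in
  let P' := adversary RP.1 RP.2 in
  (P' != RP.2) && (Rep v e w P' != None).
Proof.
move=> i_neq0 w_low y_window; rewrite /Gen /Rep /adversary /=.
set a := toF e (take k w); set y := coords e (i * a); set b := drop k w.
set t := g ^+ (l + L).
have sb : size b = v by rewrite size_drop size_tuple; lia.
have b_low : zero_on (iota 0 c0) b.
  apply/allP => j; rewrite mem_iota => j_c0; rewrite nth_drop.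
  by apply: (allP w_low); rewrite mem_iota; lia.
have -> : (i + i * t) * a = i * a + t * (i * a) by rewrite mulrDl mulrCA mulrA.
have mask := adv_guess_mask (size_coords e (i * a)) sb b_low y_window.
rewrite (coordsK e_basis) in mask.
rewrite coordsD // take_xors -/y mask xorsAC eqxx andbT.
apply/negP => /eqP[] /eqP; rewrite -subr_eq0 [i + _]addrC addrK mulf_eq0.
by rewrite (negbTE i_neq0) expf_eq0 (negbTE g_neq0) andbF.
Qed.

Definition masked_input (i : F) (w : n.-tuple bool) : n.-tuple bool :=
  insubd w (coords e (i * toF e (take k w)) ++ drop k w).

Lemma val_masked_input i w :
  val (masked_input i w) = coords e (i * toF e (take k w)) ++ drop k w.
Proof.
by rewrite val_insubd size_cat size_coords size_drop size_tuple subnKC ?eqxx ?leq_subr.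
Qed.

Lemma masked_input_inj i : i != 0 -> injective (masked_input i).
Proof.
move=> i_neq0 w1 w2 /(congr1 val); rewrite !val_masked_input => w12.
have := congr1 (take k) w12; rewrite !take_size_cat ?size_coords // => a12.
have := congr1 (drop k) w12; rewrite !drop_size_cat ?size_coords // => b12.
have sa (w : n.-tuple bool) : size (take k w) = k by rewrite size_takel ?size_tuple ?leq_subr.
have {}a12 : take k w1 = take k w2.
  apply: (toF_inj e_basis) => //; apply: (mulfI i_neq0).
  by rewrite -(coordsK e_basis (i * _)) a12 coordsK.
by apply: val_inj; rewrite /= -(cat_take_drop k w1) -(cat_take_drop k w2) a12 b12.
Qed.

Definition good_inputs (i : F) : {set n.-tuple bool} :=
  [set w in zero_set n (iota k c0) | zero_on (iota (v - L) L) (coords e (i * toF e (take k w)))].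

Lemma card_good_inputs i : i != 0 -> #|good_inputs i| = (2 ^ (n - (c0 + L)))%N.
Proof.
move=> i_neq0; set ps := iota k c0 ++ iota (v - L) L.
have -> : good_inputs i = masked_input i @^-1: zero_set n ps.
  apply/setP => w; rewrite !inE /zero_on val_masked_input all_cat.
  congr (_ && _); apply: eq_in_all => j; rewrite mem_iota => /andP[j1 j2].
    by rewrite nth_cat size_coords ifF ?nth_drop ?subnKC //; lia.
  by rewrite nth_cat size_coords ifT //; lia.
rewrite card_preimset ?card_zero_set ?size_cat ?size_iota //; last exact: masked_input_inj.
  by rewrite cat_uniq !iota_uniq andbT; apply/hasPn => j; rewrite !mem_iota; lia.
by rewrite all_cat; apply/andP; split; apply/allP => j; rewrite mem_iota /=; lia.
Qed.

Lemma attack_prob_ge_good_inputs (R : realType) :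
  (#|zero_set n (iota k c0)|%:R * #|F|%:R)^-1 * (#|F|.-1 * 2 ^ (n - (c0 + L)))%:R
    <= attack_prob e (uniform_on R (zero_set n (iota k c0))) adversary :> R.
Proof.
set S := zero_set n (iota k c0); set c : R := (#|S|%:R * #|F|%:R)^-1.
have succ_ge (w : n.-tuple bool) (i : F) : c * ((i != 0) && (w \in good_inputs i))%:R <=
    uniform_on R S w / #|F|%:R * (let RP := Gen v e w i in let P' := adversary RP.1 RP.2 in
      if (P' != RP.2) && (Rep v e w P' != None) then 1 else 0).
  case: (boolP ((i != 0) && (w \in good_inputs i))) => [/andP[i_neq0] | _]; last first.
    by rewrite mulr0 mulr_ge0 ?divr_ge0 ?uniform_on_ge0 //=; case: ifP.
  rewrite inE => /andP[wS y_window]; move: (wS); rewrite inE => w_low.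
  have /= -> := adversary_succeeds i_neq0 w_low y_window.
  by rewrite !mulr1 ffunE wS /c invfM.
have sum_good : \sum_(w : n.-tuple bool) \sum_(i : F) c * ((i != 0) && (w \in good_inputs i))%:R
    = c * (#|F|.-1 * 2 ^ (n - (c0 + L)))%:R.
  rewrite exchange_big /= (eq_bigr (fun i : F => c * ((i != 0)%:R * (2 ^ (n - (c0 + L)))%:R))).
    rewrite -mulr_sumr -mulr_suml natrM; congr (c * (_ * _)).
    rewrite -(cardC1 (0 : F)) -sumr_const [RHS]big_mkcond; apply: eq_bigr => i _.
    by rewrite !inE; case: eqP.
  move=> i _; rewrite -mulr_sumr; congr (c * _); case: eqP => [_ | /eqP i_neq0].
    by rewrite big1 ?mul0r.
  rewrite -(card_good_inputs i_neq0) mul1r -sumr_const [RHS]big_mkcond.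
  by apply: eq_bigr => w _; case: ifP.
by rewrite -sum_good; apply: ler_sum => w _; apply: ler_sum => i _; exact: succ_ge.
Qed.

(* The bound above equals (1 - 1/#|F|) 2^-L, and #|F| >= 2. *)
Lemma attack_prob_ge (R : realType) :
  ((2 : R) ^+ L)^-1 / 2 <= attack_prob e (uniform_on R (zero_set n (iota k c0))) adversary.
Proof.
apply: le_trans (attack_prob_ge_good_inputs R).
have q_ge2 : (2 : R) <= 2 ^+ k by rewrite -natrX ler_nat -hF card_finNzRing_gt1.
have cardS : (2 ^ (n - c0) = 2 ^ (n - (c0 + L)) * 2 ^ L)%N.
  by rewrite -expnD; congr (2 ^ _)%N; lia.
rewrite card_zero_set_iota ?hF ?cardS; last lia.
rewrite !natrM -subn1 natrB ?expn_gt0 // !natrX.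
move: q_ge2; set q := (2 : R) ^+ k; set B := (2 : R) ^+ L; set N := (2 : R) ^+ _ => q_ge2.
have B_gt0 : 0 < B by rewrite exprn_gt0.
have N_gt0 : 0 < N by rewrite exprn_gt0.
have q_gt0 : 0 < q by apply: lt_le_trans q_ge2.
have -> : (N * B * q)^-1 * ((q - 1%:R) * N) = (1 - q^-1) * B^-1.
  by field; rewrite !gt_eqF.
rewrite mulrC ler_pM2r ?invr_gt0 //.
have : q^-1 <= 2^-1 by rewrite lef_pV2 ?posrE.
lra.
Qed.
End Attack.

Lemma log2_eq_nat (R : realType) (x : R) (L : nat) :
  0 < x -> log2 x = L%:R -> x = 2 ^+ L.
Proof.
move=> x_gt0; rewrite -log2_exp2 /log2 => /(congr1 ( *%R^~ (ln (2 : R)))).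
rewrite !mulfVK ?gt_eqF ?ln_gt0 ?ltr1n // => /ln_inj.
by apply; rewrite posrE ?exprn_gt0.
Qed.

Lemma theorem3_parameters (R : realType) (n : nat) (delta : R) (m : int) (l v : nat) :
  0 < delta -> delta < 1 -> m <= n%:Z ->
  l%:R = (2 * m%:~R - n%:R - 2 * log2 (1 / delta)) / 3 :> R ->
  v%:R = (n%:R - l%:R) / 2 :> R ->
  exists mn L c0 : nat, [/\ m = mn%:Z, n = (2 * v + l)%N, v = (c0 + l + L)%N,
     n = (c0 + mn)%N & delta = ((2 : R) ^+ L)^-1].
Proof.
move=> delta_gt0 delta_lt1 m_le_n def_l def_v.
have def_n : n = (2 * v + l)%N.
  by apply/eqP; rewrite -(eqr_nat R) natrD natrM def_v; apply/eqP; field.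
set Lg := log2 (1 / delta) in def_l.
have def_Lg : Lg = m%:~R - v%:R - 2 * l%:R by move: def_l def_v; lra.
have Lg_gt0 : 0 < Lg.
  by rewrite /Lg /log2 divr_gt0 ?ln_gt0 ?ltr1n // div1r invf_gt1.
have [mn def_m] : exists mn : nat, m = mn%:Z.
  case: m m_le_n def_Lg {def_l} => [mn|mn] _ def_Lg; first by exists mn.
  have : 0 <= (mn.+1)%:~R :> R by rewrite ler0z.
  have := ler0n R v; have := ler0n R l.
  by move: Lg_gt0; rewrite def_Lg NegzE mulrNz; lra.
subst m; have mn_le_n : (mn <= n)%N by rewrite -lez_nat.
have mn_gt : (v + 2 * l < mn)%N.
  by rewrite -(ltr_nat R) natrD natrM; move: Lg_gt0; rewrite def_Lg -[mn%:~R]/(mn%:R); lra.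
exists mn, (mn - v - 2 * l)%N, (n - mn)%N; split; try lia.
have <- : 1 / delta = 2 ^+ (mn - v - 2 * l).
  apply: log2_eq_nat; first by rewrite div1r invr_gt0.
  by rewrite -/Lg def_Lg !natrB ?natrM //; lia.
by rewrite div1r invrK.
Qed.

Theorem theorem3 (R : realType) (n : nat) (delta : R) (m : int) (l v : nat)
    (hdelta0 : 0 < delta) (hdelta1 : delta < 1)
    (hm : m <= n%:Z)
    (hl : l%:R = (2 * m%:~R - n%:R - 2 * log2 (1 / delta)) / 3 :> R)
    (hv : v%:R = (n%:R - l%:R) / 2 :> R)
    (F : finFieldType) (hF : #|F| = (2 ^ (n - v))%N) :
  exists e : (n - v).-tuple F, is_basisF2 e /\
  exists W : {ffun n.-tuple bool -> R}, is_distr W /\ Hinf W = m%:~R /\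
  exists A : seq bool -> F * seq bool -> F * seq bool,
    delta / 2 <= attack_prob e W A.
Proof.
have [mn [L [c0 [-> def_n def_v def_mn ->]]]] := theorem3_parameters hdelta0 hdelta1 hm hl hv.
have [g g_neq0 g_gen] := finField_generator F.
exists (pbasis (n - v) g); split; first exact (pbasis_is_basis hF g_gen).
have cardS : #|zero_set n (iota (n - v) c0)| = (2 ^ mn)%N.
  by rewrite card_zero_set_iota; [congr (2 ^ _)%N|]; lia.
have S_neq0 : zero_set n (iota (n - v) c0) != set0 by rewrite -card_gt0 cardS expn_gt0.
exists (uniform_on R (zero_set n (iota (n - v) c0))); split; first exact: uniform_on_is_distr.
split; first by rewrite Hinf_uniform_on // cardS natrX log2_exp2.
by exists (adversary n v c0 l L g); apply: attack_prob_ge.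
Qed.
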